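(* Let $r\ge 2$ and $k\ge 2$ be integers and $n=k\cdot 2^r$. Then there exists an $r$-regular word of length $n$ over a two-letter alphabet.
   Context: For a word $u=u_1\cdots u_m$ over an alphabet $\mathcal A$ with $b$ letters and an integer $r\ge -1$, $u$ is $r$-regular if for every $k=0,1,\dots,r$ the sum $\sum_{1\le t\le m,\ u_t=c} t^k$ is the same for all letters $c\in\mathcal A$ (a letter not occurring contributes $0$). Here $b=2$. *)

From mathcomp Require Import all_boot.
Set Implicit Arguments. Unset Strict Implicit. Unset Printing Implicit Defensive.

Definition pos_power_sum (A : eqType) (u : seq A) (c : A) (k : nat) : nat :=
  \sum_(0 <= t < size u | nth c u t == c) t.+1 ^ k.

(* u is r-regular over the finite alphabet A, for r : nat (the case r = -1
   is vacuous and not needed): for every k = 0..r, the power sums agree for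
   all letters. *)
Definition r_regular (A : finType) (r : nat) (u : seq A) : Prop :=
  forall k, k <= r -> forall c d : A, pos_power_sum u c k = pos_power_sum u d k.

From mathcomp Require Import all_boot all_algebra.
From mathcomp Require Import ring zify.
Import GRing.Theory.

(* Read a binary word as a signed
   sequence (true = +1, false = -1) placed at positions m+1, m+2, ...  and
   call it [r]-balanced when its signed power sums of every degree j <= r
   vanish for EVERY starting offset m.  Then:
   - the signed sum at offset m+a is a binomial combination of the sums at
     offset m of degrees <= j, so balance at offset 0 implies balance at all
     offsets (this is what makes the notion closed under concatenation);
   - concatenations of r-balanced words are r-balanced;
   - Prouhet doubling: if u is r-balanced then u ++ (negated u) is
     (r+1)-balanced, since its degree-(r+1) sum is the difference of two
     shifted copies in which all terms of degree <= r cancel;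
   - r-balanced words are r-regular (the signed sum is the difference of the
     two letters' power sums).
   Two explicit 2-balanced words of lengths 8 and 12 give 2-balanced words
   of every length 4k with k >= 2; doubling r-2 times gives length k*2^r. *)

Local Open Scope ring_scope.

Definition sign (b : bool) : int := if b then 1 else -1.

Fixpoint signed_sum (m : nat) (u : seq bool) (j : nat) : int :=
  if u is b :: u' then sign b * (m.+1)%:Z ^+ j + signed_sum m.+1 u' j else 0.

Lemma signed_sum_cat m u v j :
  signed_sum m (u ++ v) j = signed_sum m u j + signed_sum (m + size u) v j.
Proof.
elim: u m => [|b u IH] m /=; first by rewrite add0r addn0.
by rewrite IH addnS addrA.
Qed.

Lemma signed_sum_negate m u j : signed_sum m (map negb u) j = - signed_sum m u j.
Proof.
elim: u m => [|b u IH] m /=; first by rewrite oppr0.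
by rewrite IH opprD; case: b; rewrite /sign ?mulN1r ?mul1r ?opprK.
Qed.

Lemma signed_sum_shift m a u j :
  signed_sum (m + a) u j =
  \sum_(i < j.+1) 'C(j, i)%:R * a%:Z ^+ (j - i) * signed_sum m u i.
Proof.
elim: u m => [|b u IH] m /=; first by rewrite big1 // => i _; rewrite mulr0.
rewrite -addSn IH.
have -> : ((m.+1 + a)%N)%:Z ^+ j = (a%:Z + (m.+1)%:Z) ^+ j by rewrite PoszD addrC.
rewrite exprDn big_distrr -big_split /=; apply: eq_bigr => i _.
by rewrite mulrDr; congr (_ + _); rewrite -mulr_natl; ring.
Qed.

Definition balanced (r : nat) (u : seq bool) : Prop :=
  forall m j, (j <= r)%N -> signed_sum m u j = 0.

(* Balance at offset 0 suffices, by [signed_sum_shift]. *)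
Lemma balanced_at_zero r u :
  (forall j, (j <= r)%N -> signed_sum 0 u j = 0) -> balanced r u.
Proof.
move=> u0 m j jr; rewrite -[m]add0n signed_sum_shift big1 // => i _.
by rewrite u0 ?mulr0 // (leq_trans _ jr) // -ltnS.
Qed.

(* Offset-independence makes balance stable under concatenation. *)
Lemma balanced_cat r u v : balanced r u -> balanced r v -> balanced r (u ++ v).
Proof. by move=> bu bv m j jr; rewrite signed_sum_cat bu // bv // addr0. Qed.

Lemma size_repeat (T : Type) (u : seq T) n : size (flatten (nseq n u)) = (n * size u)%N.
Proof. by elim: n => // n IH; rewrite /= size_cat IH mulSn. Qed.

Lemma balanced_repeat r u n : balanced r u -> balanced r (flatten (nseq n u)).
Proof. by move=> bu; elim: n => [|n IH] //=; apply: balanced_cat. Qed.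

Lemma balanced_double r u : balanced r u -> balanced r.+1 (u ++ map negb u).
Proof.
move=> bu m j jr; rewrite signed_sum_cat signed_sum_negate signed_sum_shift.
rewrite big_ord_recr /= subnn expr0 binn big1 ?add0r; first by rewrite mulr1 mul1r subrr.
by move=> i _; rewrite bu ?mulr0 // -ltnS (leq_trans _ jr).
Qed.

Definition offset_power_sum m (u : seq bool) c k : nat :=
  \sum_(0 <= t < size u | nth c u t == c) (t.+1 + m) ^ k.

Lemma offset_power_sum_cons m b u c k :
  offset_power_sum m (b :: u) c k =
  ((if b == c then m.+1 ^ k else 0) + offset_power_sum m.+1 u c k)%N.
Proof.
rewrite /offset_power_sum /= big_mkcond big_nat_recl //= add1n big_mkcond.
by congr (_ + _)%N; rewrite [in RHS]big_mkcond; apply: eq_bigr => t _; rewrite addSnnS.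
Qed.

Lemma signed_sum_letters m u k :
  signed_sum m u k = (offset_power_sum m u true k)%:Z - (offset_power_sum m u false k)%:Z.
Proof.
elim: u m => [|b u IH] m; first by rewrite /offset_power_sum !big_geq.
rewrite /= !offset_power_sum_cons IH !PoszD.
by case: b; rewrite /sign -!natz ?natrX; ring.
Qed.

Lemma balanced_regular r u : balanced r u -> r_regular r u.
Proof.
move=> bu k kr c d.
have at0 c' : pos_power_sum u c' k = offset_power_sum 0 u c' k.
  by apply: eq_bigr => t _; rewrite addn0.
move/eqP: (bu 0%N k kr); rewrite signed_sum_letters subr_eq0 => /eqP[eq_tf].
by rewrite !at0; case: c; case: d.
Qed.

(* The Thue-Morse word of length 8 and a 2-balanced word of length 12. *)
Definition thue_morse8 := [:: true; false; false; true; false; true; true; false].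
Definition word12 :=
  [:: true; false; true; false; false; false; true; true; true; false; true; false].

Lemma balanced_thue_morse8 : balanced 2 thue_morse8.
Proof. by apply: balanced_at_zero => -[|[|[|]]]. Qed.

Lemma balanced_word12 : balanced 2 word12.
Proof. by apply: balanced_at_zero => -[|[|[|]]]. Qed.

(* Every length 4k with k >= 2 is 8a or 12 + 8a. *)
Lemma balanced2_length k : (2 <= k)%N -> exists u, size u = (k * 4)%N /\ balanced 2 u.
Proof.
move=> k2.
have [k_odd|k_even] := boolP (odd k).
  exists (word12 ++ flatten (nseq (k - 3)./2 thue_morse8)).
  split; last by apply/balanced_cat/balanced_repeat/balanced_thue_morse8/balanced_word12.
  have k3 : (3 <= k)%N by case: k k2 k_odd => [|[|[|]]].
  rewrite size_cat size_repeat /=.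
  have := odd_double_half (k - 3); rewrite oddB // k_odd -muln2 /=; lia.
exists (flatten (nseq k./2 thue_morse8)); split; last exact/balanced_repeat/balanced_thue_morse8.
rewrite size_repeat /=; have := odd_double_half k; rewrite (negbTE k_even) -muln2; lia.
Qed.

Local Close Scope ring_scope.

Theorem mainTheorem11 (r k : nat) (hr : 2 <= r) (hk : 2 <= k) :
  exists u : seq bool, size u = k * 2 ^ r /\ r_regular r u.
Proof.
suff [u [su bu]] : exists u, size u = k * 2 ^ r /\ balanced r u.
  by exists u; split; last exact: balanced_regular.
elim: r hr => [|r IH] //; rewrite leq_eqVlt => /orP[/eqP <-|hr].
  exact: balanced2_length.
have [u [su bu]] := IH hr.
exists (u ++ map negb u); split; last exact: balanced_double.
by rewrite size_cat size_map su expnS; lia.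
Qed.
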